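(* Let $\lambda>0$, $\mathbf{A}\in\mathbb{R}^{m\times n}$ with columns $\mathbf{a}_1,\dots,\mathbf{a}_n$, let $f:\mathbb{R}^m\to\mathbb{R}\cup\{+\infty\}$, and let $h:\mathbb{R}\to\mathbb{R}\cup\{+\infty\}$ be proper, closed and convex with $0\in\mathrm{dom}(h)$, $h(0)=0$, and $0$ an accumulation point of $\mathrm{dom}(h)$. Let $\nu=(\mathcal{S}_0,\mathcal{S}_1,\mathcal{S}_\bullet)$ and $\nu'=(\mathcal{S}_0',\mathcal{S}_1',\mathcal{S}_\bullet')$ be partitions of $\{1,\dots,n\}$ such that $\mathcal{S}_0\subseteq\mathcal{S}_0'$, $\mathcal{S}_1\subseteq\mathcal{S}_1'$ and $(\mathcal{S}_0'\setminus\mathcal{S}_0)\cup(\mathcal{S}_1'\setminus\mathcal{S}_1)=\{i\}$ for some $i\in\mathcal{S}_\bullet$. Then for all $\mathbf{u}\in\mathbb{R}^m$, $$D^{\nu'}(\mathbf{u})=D^\nu(\mathbf{u})+\begin{cases}\phi_0(\mathbf{a}_i^\top\mathbf{u}) & \text{if } i\in\mathcal{S}_0',\\ \phi_1(\mathbf{a}_i^\top\mathbf{u}) & \text{if } i\in\mathcal{S}_1'.\end{cases}$$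
   Context: $\|\mathbf{x}\|_0$ is the number of nonzero entries of $\mathbf{x}$; $\eta(\text{condition})=0$ if the condition holds and $+\infty$ otherwise; $\omega^*$ denotes the convex conjugate of $\omega$. An accumulation point $0$ of a set $\mathcal{C}\subseteq\mathbb{R}$: every neighborhood of $0$ contains a point of $\mathcal{C}$ other than $0$. For a partition $\nu=(\mathcal{S}_0,\mathcal{S}_1,\mathcal{S}_\bullet)$: $\mathcal{X}^\nu=\{\mathbf{x}\in\mathbb{R}^n: x_j=0\ \forall j\in\mathcal{S}_0,\ x_j\neq0\ \forall j\in\mathcal{S}_1\}$; $g^\nu(\mathbf{x})=\lambda\|\mathbf{x}\|_0+\sum_{j=1}^n h(x_j)+\eta(\mathbf{x}\in\mathcal{X}^\nu)$; $D^\nu(\mathbf{u})=-f^*(-\mathbf{u})-(g^\nu)^*(\mathbf{A}^\top\mathbf{u})$. Also $\phi_0(v)=\max(h^*(v)-\lambda,0)$ and $\phi_1(v)=\max(\lambda-h^*(v),0)$.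
   Formalization: The identity is claimed only for those $\mathbf{u}$ at which not both $D^\nu(\mathbf{u})=-\infty$ and the added term $\phi_0(\mathbf{a}_i^\top\mathbf{u})$ or $\phi_1(\mathbf{a}_i^\top\mathbf{u})$ equals $+\infty$. The statement above fails without it. *)

From HB Require Import structures.
From mathcomp Require Import all_boot all_order all_algebra.
From mathcomp Require Import all_classical all_reals all_analysis.
Set Implicit Arguments. Unset Strict Implicit. Unset Printing Implicit Defensive.
Import Order.TTheory GRing.Theory Num.Theory.
Import numFieldTopology.Exports.
Local Open Scope ring_scope.
Local Open Scope ereal_scope.

Section Defs.
Variable R : realType.

Local Open Scope classical_set_scope.
Definition edom {T : Type} (F : T -> \bar R) : set T := [set x | F x < +oo].

Definition proper_fun {T : Type} (F : T -> \bar R) : Prop :=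
  (forall x, F x != -oo) /\ (exists x, F x < +oo).

Definition econvex (h : R -> \bar R) : Prop :=
  forall x y (t : R), (0 < t < 1)%R ->
    h (t * x + (1 - t) * y)%R <= t%:E * h x + (1 - t)%:E * h y.

Definition conj1 (h : R -> \bar R) (v : R) : \bar R :=
  ereal_sup (range (fun x : R => (v * x)%:E - h x)).

Definition conjV (k : nat) (F : 'cV[R]_k -> \bar R) (y : 'cV[R]_k) : \bar R :=
  ereal_sup (range (fun x : 'cV[R]_k => ((y^T *m x) ord0 ord0)%:E - F x)).

Definition eta (b : bool) : \bar R := if b then 0 else +oo.

Definition l0 (n : nat) (x : 'cV[R]_n) : nat := #|[set j | x j ord0 != 0%R]|.

Local Close Scope classical_set_scope.
Definition is_partition3 (n : nat) (S0 S1 Sb : {set 'I_n}) : Prop :=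
  [/\ [disjoint S0 & S1], [disjoint S0 & Sb], [disjoint S1 & Sb]
    & S0 :|: S1 :|: Sb = [set: 'I_n]].

Definition in_Xnu (n : nat) (S0 S1 : {set 'I_n}) (x : 'cV[R]_n) : bool :=
  [forall j in S0, x j ord0 == 0%R] && [forall j in S1, x j ord0 != 0%R].

Definition gnu (lam : R) (h : R -> \bar R) (n : nat) (S0 S1 : {set 'I_n})
  (x : 'cV[R]_n) : \bar R :=
  (lam * (l0 x)%:R)%:E + (\sum_(j < n) h (x j ord0)) + eta (in_Xnu S0 S1 x).

Definition Dnu (lam : R) (h : R -> \bar R) (m n : nat) (A : 'M[R]_(m, n))
  (f : 'cV[R]_m -> \bar R) (S0 S1 : {set 'I_n}) (u : 'cV[R]_m) : \bar R :=
  - conjV f (- u) - conjV (gnu lam h S0 S1) (A^T *m u).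

Definition phi0 (lam : R) (h : R -> \bar R) (v : R) : \bar R :=
  maxe (conj1 h v - lam%:E) 0.
Definition phi1 (lam : R) (h : R -> \bar R) (v : R) : \bar R :=
  maxe (lam%:E - conj1 h v) 0.

End Defs.

From Pilot Require Import Defs.
From HB Require Import structures.
From mathcomp Require Import all_boot all_order all_algebra.
From mathcomp Require Import all_classical all_reals all_analysis.
From mathcomp Require Import ring lra.
Set Implicit Arguments. Unset Strict Implicit. Unset Printing Implicit Defensive.
Import Order.TTheory GRing.Theory Num.Theory.
Import numFieldTopology.Exports.
Local Open Scope ring_scope.
Local Open Scope ereal_scope.

(* Moving the free index i into S0 or S1 adds to g^nu the constraint x_i = 0,
   resp. x_i <> 0.  As g^nu is separable, its conjugate at w = A^T u splits into a
   part not involving x_i plus the one-dimensional conjugate at v = w_i of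
   t |-> lam [t <> 0] + h t + (constraint on t).  Unconstrained this is
   max (h^*(v) - lam, 0), with t = 0 forced it is 0, and with t <> 0 forced it is
   h^*(v) - lam: the value 0 at t = 0 is still approached, since 0 is an
   accumulation point of dom h and convexity with h 0 = 0 gives
   h (s t) <= s h t.  The differences are phi_0 and phi_1. *)

Section ExtendedRealFacts.
Variable R : realType.
Implicit Types (x y z : \bar R) (B C : set (\bar R)).

Lemma ge_adde_ereal_sup x B z :
  (forall y, B y -> x + y <= z) -> x + ereal_sup B <= z.
Proof.
case: x => [r| |] xBz; last by rewrite addNye leNye.
- rewrite -leeBrDl//; apply: ge_ereal_sup => y By; rewrite leeBrDl//; exact: xBz.
- have [->|supB] := eqVneq (ereal_sup B) -oo; first by rewrite addeNy leNye.
  have [y By yNy] : exists2 y, B y & -oo < y by apply: ereal_sup_gt; rewrite ltNye.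
  by have := xBz y By; rewrite addye ?gt_eqF// leye_eq => /eqP ->; exact: leey.
Qed.

Lemma ge_ereal_supD B C z :
  (forall x y, B x -> C y -> x + y <= z) -> ereal_sup B + ereal_sup C <= z.
Proof.
move=> BCz; apply: ge_adde_ereal_sup => y Cy; rewrite addeC.
by apply: ge_adde_ereal_sup => x Bx; rewrite addeC; exact: BCz.
Qed.

Lemma subeDK x y z : 0 <= z -> ~ (x - (y + z) = -oo /\ z = +oo) ->
  x - y = x - (y + z) + z.
Proof.
case: z => [r||] //= r0 xyz.
- case: x xyz => [a||]; case: y => [b||] //= _.
  by rewrite -!EFinD; congr EFin; ring.
- case: y xyz => [b||] xyz /=.
  + by exfalso; apply: xyz; split => //; case: x.
  + by case: x xyz.
  + by case: x xyz => [a||] xyz //=; exfalso; apply: xyz.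
Qed.

Lemma maxe_subr0 x (r : R) : x != -oo ->
  maxe (x - r%:E) 0 = x - r%:E + maxe (r%:E - x) 0.
Proof.
case: x => [a| |] // _; last by rewrite addye // addeNy maxye maxNye adde0.
rewrite -!EFinB -!EFin_max -EFinD; congr EFin.
have [ar0|ar0] := @real_leP R (a - r)%R 0%R (num_real _) (num_real _).
  by rewrite max_l; lra.
by rewrite max_r; lra.
Qed.

End ExtendedRealFacts.

Section ScalarPenalty.
Variables (R : realType) (lam : R) (h : R -> \bar R).
Hypotheses (hNy : forall t, h t != -oo) (hconv : econvex h) (h0 : h 0%R = 0)
  (hlim : limit_point (edom h) 0%R).

Lemma eta_neqNy b : Defs.eta R b != -oo.
Proof. by case: b. Qed.

Lemma exists_neq0_conj_ge (w e : R) : (0 < e)%R ->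
  exists2 t, t != 0%R & (- e)%:E <= (w * t)%:E - h t.
Proof.
move=> e0.
(* w (s t1) - h (s t1) >= s (w t1 - h t1) for any t1 in dom h and s in (0, 1). *)
have [t1 [t10 t1h _]] := hlim (@filterT _ _ (nbhs_filter (0%R : R))).
have /fineK ht1 : h t1 \is a fin_num by rewrite fin_numE hNy lt_eqF.
set r1 := fine (h t1) in ht1; set K := (w * t1 - r1)%R; set M := (`|K| + 1)%R.
have M0 : (0 < M)%R by rewrite /M; have := normr_ge0 K; lra.
set s := (e / (M + e))%R.
have s0 : (0 < s)%R by rewrite /s divr_gt0 //; lra.
have sMe : (s * (M + e) = e)%R by rewrite /s divfK // gt_eqF //; lra.
have s1 : (s < 1)%R by nra.
exists (s * t1)%R; first by rewrite mulf_neq0 // gt_eqF.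
have /(hconv t1 0%R) : (0 < s < 1)%R by rewrite s0 s1.
rewrite mulr0 addr0 h0 mule0 adde0 -ht1 -EFinM => hst1.
apply: (le_trans _ (leeB (lexx _) hst1)); rewrite -EFinB lee_fin.
have sK : (0 <= s * (K + `|K|))%R.
  by apply: mulr_ge0; [lra | have := ler_norm (- K); rewrite normrN; lra].
by rewrite /K /M in sK sMe *; nra.
Qed.

Lemma ge_conj1_subr (w : R) z :
  (forall t, t != 0%R -> (w * t)%:E - h t - lam%:E <= z) -> conj1 h w - lam%:E <= z.
Proof.
move=> wz; rewrite leeBlDr //; apply: ge_ereal_sup => _ [t _ <-].
have [->|t0] := eqVneq t 0%R; last by rewrite -leeBlDr //; exact: wz.
rewrite mulr0 h0 sube0; apply/lee_subgt0Pr => e e0.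
have [t' t'0 t'e] := @exists_neq0_conj_ge w e e0.
by rewrite sub0e; apply: (le_trans t'e); rewrite -leeBlDr //; exact: wz.
Qed.

Definition pen1 (C : pred R) (t : R) : \bar R :=
  (lam * (t != 0%R)%:R)%:E + h t + Defs.eta R (C t).

Lemma pen1_neqNy C t : pen1 C t != -oo.
Proof. by rewrite !adde_eq_ninfty !negb_or hNy eta_neqNy. Qed.

Lemma pen1_neq0 C w t : t != 0%R ->
  (w * t)%:E - pen1 C t = (w * t)%:E - h t - lam%:E - Defs.eta R (C t).
Proof.
move=> t0; rewrite /pen1 t0 mulr1 oppeD; last first.
  by apply: ltninfty_adde_def; rewrite inE ltNye ?eta_neqNy // adde_eq_ninfty negb_or hNy.
by rewrite oppeD ?fin_num_adde_defr // !addeA (addeAC _ (- lam%:E)).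
Qed.

Lemma pen1_0 C w : (w * 0)%:E - pen1 C 0%R = - Defs.eta R (C 0%R).
Proof. by rewrite /pen1 eqxx /= !mulr0 h0 adde0 add0e add0e. Qed.

Lemma conj1_pen1T w : conj1 (pen1 predT) w = maxe (conj1 h w - lam%:E) 0.
Proof.
apply/eqP; rewrite eq_le; apply/andP; split.
  apply: ge_ereal_sup => _ [t _ <-].
  have [->|t0] := eqVneq t 0%R; first by rewrite pen1_0 oppe0 le_max lexx orbT.
  rewrite pen1_neq0 // sube0 le_max; apply/orP; left; apply: leeB => //.
  by apply: ereal_sup_ubound; exists t.
rewrite ge_max; apply/andP; split.
  apply: ge_conj1_subr => t t0; apply: ereal_sup_ubound; exists t => //.
  by rewrite pen1_neq0 // sube0.
by apply: ereal_sup_ubound; exists 0%R => //; rewrite pen1_0 oppe0.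
Qed.

Lemma conj1_pen1_eq0 w : conj1 (pen1 (pred1 0%R)) w = 0.
Proof.
apply/eqP; rewrite eq_le; apply/andP; split.
  apply: ge_ereal_sup => _ [t _ <-].
  have [->|t0] := eqVneq t 0%R; first by rewrite pen1_0 /= eqxx oppe0.
  by rewrite pen1_neq0 //= (negbTE t0) addeNy leNye.
by apply: ereal_sup_ubound; exists 0%R => //; rewrite pen1_0 /= eqxx oppe0.
Qed.

Lemma conj1_pen1_neq0 w : conj1 (pen1 (predC1 0%R)) w = conj1 h w - lam%:E.
Proof.
apply/eqP; rewrite eq_le; apply/andP; split.
  apply: ge_ereal_sup => _ [t _ <-].
  have [->|t0] := eqVneq t 0%R; first by rewrite pen1_0 /= eqxx leNye.
  rewrite pen1_neq0 //= t0 /= sube0; apply: leeD => //.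
  by apply: ereal_sup_ubound; exists t.
apply: ge_conj1_subr => t t0; apply: ereal_sup_ubound; exists t => //.
by rewrite pen1_neq0 //= t0 /= sube0.
Qed.

End ScalarPenalty.

Lemma l0E (R : realType) (n : nat) (x : 'cV[R]_n) :
  l0 x = (\sum_j (x j ord0 != 0%R : nat))%N.
Proof.
rewrite /l0 -sum1_card big_mkcond; apply: eq_bigr => j _.
case: ifPn => [/set_mem /= -> // | /negP nj].
by case: (boolP (x j ord0 != 0%R)) => // xj; case: nj; exact: mem_set.
Qed.

Section CoordinateSplit.
Variables (R : realType) (n : nat) (lam : R) (h : R -> \bar R).
Variables (S0 S1 : {set 'I_n}) (i : 'I_n).
Hypotheses (hNy : forall t, h t != -oo) (h0 : h 0%R = 0).
Hypotheses (iS0 : i \notin S0) (iS1 : i \notin S1).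

Definition zero_coord (x : 'cV[R]_n) : 'cV[R]_n :=
  \col_j (if j == i then 0%R else x j ord0).

Lemma dot_zero_coord (w x : 'cV[R]_n) : ((w^T *m x) ord0 ord0 =
  (w^T *m zero_coord x) ord0 ord0 + w i ord0 * x i ord0)%R.
Proof.
rewrite !mxE (bigD1 i) //= [in RHS](bigD1 i) //= !mxE eqxx mulr0 add0r addrC.
by congr (_ + _)%R; apply: eq_bigr => j ji; rewrite !mxE (negbTE ji).
Qed.

Lemma gnu_neqNy x : gnu lam h S0 S1 x != -oo.
Proof.
rewrite /gnu !adde_eq_ninfty !negb_or eta_neqNy andbT /=.
by apply/negP; rewrite esum_eqNy => /existsP [j /andP [_]]; rewrite (negbTE (hNy _)).
Qed.

Lemma gnu_zero_coord x : gnu lam h S0 S1 x =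
  gnu lam h S0 S1 (zero_coord x) + ((lam * (x i ord0 != 0%R)%:R)%:E + h (x i ord0)).
Proof.
rewrite /gnu; have -> : in_Xnu S0 S1 (zero_coord x) = in_Xnu S0 S1 x.
  rewrite /in_Xnu; congr (_ && _); apply: eq_forallb_in => j jS; rewrite mxE ifN //.
    by apply: contraNneq iS0 => <-.
  by apply: contraNneq iS1 => <-.
rewrite !l0E (bigD1 i) //= [in RHS](bigD1 i) //=.
rewrite (bigD1 i (P := predT)) //= [in RHS](bigD1 i (P := predT)) //=.
rewrite !mxE eqxx h0 eqxx /= add0n add0e.
have -> : (\sum_(j | j != i) (zero_coord x j ord0 != 0%R : nat) =
           \sum_(j | j != i) (x j ord0 != 0%R : nat))%N.
  by apply: eq_bigr => j ji; rewrite !mxE (negbTE ji).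
have -> : \sum_(j | j != i) h (zero_coord x j ord0) = \sum_(j | j != i) h (x j ord0).
  by apply: eq_bigr => j ji; rewrite !mxE (negbTE ji).
by rewrite natrD mulrDr EFinD addeACA [RHS]addeC !addeA.
Qed.

Lemma conjV_gnu_eta (C : pred R) (w : 'cV[R]_n) :
  conjV (fun x => gnu lam h S0 S1 x + Defs.eta R (C (x i ord0))) w =
  ereal_sup (range (fun x =>
    ((w^T *m zero_coord x) ord0 ord0)%:E - gnu lam h S0 S1 (zero_coord x)))
  + conj1 (pen1 lam h C) (w i ord0).
Proof.
have splitE x : ((w^T *m x) ord0 ord0)%:E - (gnu lam h S0 S1 x + Defs.eta R (C (x i ord0))) =
    ((w^T *m zero_coord x) ord0 ord0)%:E - gnu lam h S0 S1 (zero_coord x)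
    + ((w i ord0 * x i ord0)%:E - pen1 lam h C (x i ord0)).
  rewrite gnu_zero_coord -addeA -/(pen1 lam h C _) dot_zero_coord EFinD oppeD.
    exact: addeACA.
  by apply: ltninfty_adde_def; rewrite inE ltNye ?gnu_neqNy ?pen1_neqNy.
rewrite /conjV; apply/eqP; rewrite eq_le; apply/andP; split.
  apply: ge_ereal_sup => _ [x _ <-]; rewrite splitE; apply: leeD.
    by apply: ereal_sup_ubound; exists x.
  by apply: ereal_sup_ubound; exists (x i ord0).
apply: ge_ereal_supD => _ _ [x _ <-] [t _ <-].
pose xt : 'cV[R]_n := \col_j (if j == i then t else x j ord0).
have zxt : zero_coord xt = zero_coord x.
  by apply/matrixP => j k; rewrite !mxE; case: (j == i).
have xti : xt i ord0 = t by rewrite mxE eqxx.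
by apply: ereal_sup_ubound; exists xt => //; rewrite splitE zxt xti.
Qed.

End CoordinateSplit.

Lemma forall_in_extend1 (I : finType) (A A' : {set I}) (P : pred I) (i : I) (b : bool) :
  (forall j, (j \in A') = (j \in A) || (j == i) && b) ->
  [forall j in A', P j] = [forall j in A, P j] && (b ==> P i).
Proof.
move=> A'E; apply/forall_inP/andP => [PA'|[/forall_inP PA Pi] j].
  split; first by apply/forall_inP => j jA; apply: PA'; rewrite A'E jA.
  by apply/implyP => bi; apply: PA'; rewrite A'E eqxx bi orbT.
by rewrite A'E => /orP [/PA // | /andP [/eqP -> /(implyP Pi)]].
Qed.

Lemma refine1_memE (I : finType) (S S' T T' : {set I}) (i : I) :
  S \subset S' -> (S' :\: S) :|: (T' :\: T) = [set i] -> i \notin S ->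
  forall j, (j \in S') = (j \in S) || (j == i) && (i \in S').
Proof.
move=> sSS' Hi iS j; have [->|ji] := eqVneq j i; first by rewrite (negbTE iS).
rewrite andFb orbF; apply/idP/idP => [jS'|]; last exact: (fintype.subsetP sSS').
apply/negPn/negP => jS; have : j \in [set i] by rewrite -Hi !inE jS jS'.
by rewrite inE (negbTE ji).
Qed.

Lemma refine1_mem_swap (I : finType) (S S' T T' : {set I}) (i : I) :
  [disjoint S' & T'] -> (S' :\: S) :|: (T' :\: T) = [set i] ->
  (i \in T') = ~~ (i \in S').
Proof.
move=> dST Hi; have : i \in [set i] by rewrite inE.
rewrite -Hi !inE => /orP [/andP [_ iS'] | /andP [_ iT']].
  by rewrite iS' (disjointFr dST iS').
by rewrite iT' (disjointFl dST iT').
Qed.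

Lemma eta_andb (R : realType) (a b : bool) :
  Defs.eta R (a && b) = Defs.eta R a + Defs.eta R b.
Proof. by case: a; case: b; rewrite /= ?adde0 ?addey. Qed.

Section Refinement.
Variables (R : realType) (n : nat) (S0 S1 Sb S0' S1' Sb' : {set 'I_n}) (i : 'I_n).
Hypotheses (nu : is_partition3 S0 S1 Sb) (nu' : is_partition3 S0' S1' Sb').
Hypotheses (sub0 : S0 \subset S0') (sub1 : S1 \subset S1').
Hypotheses (Hi : (S0' :\: S0) :|: (S1' :\: S1) = [set i]) (iSb : i \in Sb).

Lemma refine1_notin0 : i \notin S0.
Proof. by case: nu => _ d0b _ _; rewrite (disjointFl d0b iSb). Qed.

Lemma refine1_notin1 : i \notin S1.
Proof. by case: nu => _ _ d1b _; rewrite (disjointFl d1b iSb). Qed.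

Definition refine1_pred : pred R := if i \in S0' then pred1 0%R else predC1 0%R.

Lemma in_Xnu_refine1 (x : 'cV[R]_n) :
  in_Xnu S0' S1' x = in_Xnu S0 S1 x && refine1_pred (x i ord0).
Proof.
have S0'E := refine1_memE sub0 Hi refine1_notin0.
have S1'E := refine1_memE sub1 (etrans (finset.setUC _ _) Hi) refine1_notin1.
have [d01' _ _ _] := nu'.
rewrite /in_Xnu (forall_in_extend1 _ S0'E) (forall_in_extend1 _ S1'E).
rewrite (refine1_mem_swap d01' Hi) /refine1_pred.
by case: (i \in S0'); rewrite /= ?andbT ?andbA // andbAC.
Qed.

Lemma gnu_refine1 (lam : R) (h : R -> \bar R) (x : 'cV[R]_n) :
  gnu lam h S0' S1' x = gnu lam h S0 S1 x + Defs.eta R (refine1_pred (x i ord0)).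
Proof. by rewrite /gnu in_Xnu_refine1 eta_andb !addeA. Qed.

End Refinement.

Theorem lemmaA3 (R : realType) (m n : nat) (lam : R) (A : 'M[R]_(m, n))
  (f : 'cV[R]_m -> \bar R) (h : R -> \bar R)
  (S0 S1 Sb S0' S1' Sb' : {set 'I_n}) (i : 'I_n) :
  (0 < lam)%R ->
  (forall x, f x != -oo) ->
  proper_fun h -> lower_semicontinuous h -> econvex h ->
  h 0%R = 0 ->
  limit_point (edom h) 0%R ->
  is_partition3 S0 S1 Sb -> is_partition3 S0' S1' Sb' ->
  S0 \subset S0' -> S1 \subset S1' ->
  (S0' :\: S0) :|: (S1' :\: S1) = [set i] -> i \in Sb ->
  forall u : 'cV[R]_m,
    let v := (A^T *m u) i ord0 in
    let phi := if i \in S0' then phi0 lam h v else phi1 lam h v in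
    (* the right-hand side D^nu(u) + phi is well defined (not -oo + +oo) *)
    ~ (Dnu lam h A f S0 S1 u = -oo /\ phi = +oo) ->
    Dnu lam h A f S0' S1' u = Dnu lam h A f S0 S1 u + phi.
Proof.
move=> _ _ [hNy _] _ hconv h0 hlim nu nu' sub0 sub1 Hi iSb u v phi.
have iS0 := refine1_notin0 nu iSb; have iS1 := refine1_notin1 nu iSb.
have gnuT : gnu lam h S0 S1 = fun x => gnu lam h S0 S1 x + Defs.eta R (predT (x i ord0)).
  by apply/funext => x; rewrite adde0.
have gnu'E := funext (gnu_refine1 nu nu' sub0 sub1 Hi iSb lam h).
rewrite /Dnu gnuT gnu'E !conjV_gnu_eta // conj1_pen1T // -/v /phi /refine1_pred.
have c0 : 0 <= conj1 h v.
  by apply: ereal_sup_ubound; exists 0%R => //; rewrite mulr0 h0 sube0.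
case: ifP => _.
  rewrite conj1_pen1_eq0 // adde0; apply: subeDK.
  by rewrite /phi0 le_max lexx orbT.
rewrite conj1_pen1_neq0 // maxe_subr0 ?addeA; last by rewrite gt_eqF // (lt_le_trans _ c0) ?ltNye.
by apply: subeDK; rewrite /phi1 le_max lexx orbT.
Qed.
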